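(* Let $(X,\tau)$ be a topological space with $|X|=\kappa$. Then: (i) $X$ is completely Hausdorff if and only if every compact subset of $X$ (of cardinality $\le\kappa$) is zero-closed; (ii) $X$ is Urysohn if and only if every compact subset of $X$ is Urysohn-closed; (iii) $X$ is Hausdorff if and only if every compact subset of $X$ is $\theta$-closed; (iv) $X$ is a kc-space if and only if every compact subset of $X$ is closed; (v) $X$ is weakly Hausdorff if and only if every compact subset of $X$ of cardinality $\le 1$ is $\delta$-closed; (vi) $X$ is $T_1$ if and only if every compact subset of $X$ of cardinality $\le 1$ is closed; (vii) $X$ is $T_0$ if and only if every compact subset of $X$ of cardinality $\le 1$ is $\lambda$-closed.
   Context: A subset $A$ of $X$ is zero-open if for each $x\in A$ there exist a zero-set $Z$ and a cozero-set $C$ of $X$ with $x\in C\subseteq Z\subseteq A$; zero-closed sets are complements of zero-open sets. $X$ is completely Hausdorff if any two distinct points have disjoint cozero-set neighborhoods. A set $A$ is Urysohn-open if for each $x\in A$ there are open $U,V$ with $x\in U\subseteq \mathrm{Cl}(U)\subseteq V\subseteq \mathrm{Cl}(V)\subseteq A$; Urysohn-closed sets are their complements. $X$ is Urysohn if any two distinct points have open neighborhoods with disjoint closures. The $\theta$-closure of $A$ is $\{x\in X:\mathrm{Cl}(U)\cap A\neq\emptyset$ for every open $U\ni x\}$, and $A$ is $\theta$-closed if it equals its $\theta$-closure. A set $U$ is regular open if $U=\mathrm{Int}(\mathrm{Cl}(U))$; $x$ is a $\delta$-cluster point of $A$ if $A\cap U\ne\emptyset$ for every regular open $U\ni x$;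 $A$ is $\delta$-closed if it contains all its $\delta$-cluster points. A $\Lambda$-set is an intersection of open sets; $A$ is $\lambda$-closed if $A=L\cap C$ with $L$ a $\Lambda$-set and $C$ closed. $X$ is a kc-space if every compact subset is closed. $X$ is weakly Hausdorff if every singleton is $\delta$-closed (equivalently its semi-regularization is $T_1$). *)

From HB Require Import structures.
From mathcomp Require Import all_boot all_order all_algebra.
From mathcomp Require Import all_classical all_reals all_analysis.
From mathcomp Require Import Rstruct Rstruct_topology.
From Stdlib Require Import Rdefinitions.

Set Implicit Arguments.
Unset Strict Implicit.
Unset Printing Implicit Defensive.

Import Order.TTheory GRing.Theory Num.Theory.
Local Open Scope classical_set_scope.

Section Defs.
Context {T : topologicalType}.

Definition zero_set (A : set T) : Prop :=
  exists f : T -> Rdefinitions.R, continuous f /\ A = f @^-1` [set 0%R].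

Definition cozero_set (A : set T) : Prop :=
  exists f : T -> Rdefinitions.R, continuous f /\ A = f @^-1` [set~ 0%R].

Definition zero_open (A : set T) : Prop :=
  forall x, A x -> exists Z C : set T,
    [/\ zero_set Z, cozero_set C, C x, C `<=` Z & Z `<=` A].

Definition zero_closed (A : set T) : Prop := zero_open (~` A).

Definition completely_hausdorff : Prop :=
  forall x y : T, x <> y -> exists U V : set T,
    [/\ cozero_set U, cozero_set V, U x, V y & U `&` V = set0].

Definition urysohn_open (A : set T) : Prop :=
  forall x, A x -> exists U V : set T,
    [/\ open U, open V, U x, closure U `<=` V & closure V `<=` A].

Definition urysohn_closed (A : set T) : Prop := urysohn_open (~` A).

Definition urysohn_space : Prop :=
  forall x y : T, x <> y -> exists U V : set T,
    [/\ open U, open V, U x, V y & closure U `&` closure V = set0].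

Definition theta_closure (A : set T) : set T :=
  [set x | forall U : set T, open U -> U x -> closure U `&` A !=set0].

Definition theta_closed (A : set T) : Prop := theta_closure A = A.

Definition regular_open (U : set T) : Prop := U = interior (closure U).

Definition delta_cluster (A : set T) (x : T) : Prop :=
  forall U : set T, regular_open U -> U x -> A `&` U !=set0.

Definition delta_closed (A : set T) : Prop :=
  forall x, delta_cluster A x -> A x.

Definition Lambda_set (L : set T) : Prop :=
  exists F : set (set T), (forall U, F U -> open U) /\ L = \bigcap_(U in F) U.

Definition lambda_closed (A : set T) : Prop :=
  exists L C : set T, [/\ Lambda_set L, closed C & A = L `&` C].

Definition kc_space : Prop := forall K : set T, compact K -> closed K.

Definition weakly_hausdorff : Prop := forall x : T, delta_closed [set x].

End Defs.

From HB Require Import structures.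
From mathcomp Require Import all_boot all_order all_algebra.
From mathcomp Require Import all_classical all_reals all_analysis.
From mathcomp Require Import Rstruct Rstruct_topology.
Import GRing.Theory Num.Theory.
Local Open Scope classical_set_scope.
Local Open Scope card_scope.

(* By compactness, a separation of pairs of points which survives finite
   intersections on the side of one point and finite unions on the side of the
   other extends to a separation of a point from a compact set: this yields
   each "only if", and applying the hypothesis to singletons each "if".
   In (v)-(vii) the compact sets are empty or singletons, and the empty set
   has each of the closedness properties. *)

Set Implicit Arguments.
Unset Strict Implicit.

Lemma card_le_unitP (T : Type) (K : set T) :
  K #<= [set: unit] <-> (forall a b, K a -> K b -> a = b).
Proof.
split=> [/pcard_injP [f f_inj] a b Ka Kb|K_sub].
  by apply: f_inj; rewrite ?inE //; case: (f a); case: (f b).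
apply/pcard_injP; exists (fun=> tt) => a b /set_mem Ka /set_mem Kb _.
exact: K_sub.
Qed.

Lemma card_le_unit_set1 (T : Type) (x : T) : [set x] #<= [set: unit].
Proof. by apply/card_le_unitP => a b -> ->. Qed.

Lemma card_le_unit_cases (T : Type) (K : set T) :
  K #<= [set: unit] -> K = set0 \/ exists x, K = [set x].
Proof.
move=> /card_le_unitP K_sub.
have [->|/set0P [x Kx]] := eqVneq K set0; first by left.
by right; exists x; apply/seteqP; split=> [y Ky|y ->] //; exact: K_sub.
Qed.

Lemma setIU_eq0 (T : Type) (A A' B B' : set T) :
  A `&` B = set0 -> A' `&` B' = set0 -> (A `&` A') `&` (B `|` B') = set0.
Proof.
move=> AB0 AB0'; rewrite setIUr.
by rewrite (subsetI_eq0 (@subIsetl _ _ _) (@subset_refl _ _) AB0)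
           (subsetI_eq0 (@subIsetr _ _ _) (@subset_refl _ _) AB0') setU0.
Qed.

Section separation.
Context {T : topologicalType}.
Implicit Types A B K : set T.

Lemma closureI_open_eq0 A B :
  open B -> A `&` B = set0 -> closure A `&` B = set0.
Proof.
move=> oB /disjoints_subset AB; rewrite setIC; apply/disjoints_subset.
rewrite -interiorC -(interior_id B).1 //; apply: interiorS.
by move=> x Bx Ax; exact: AB Ax Bx.
Qed.

(* Otherwise the sets K `\` B, for B separated by D from some A, form a proper
   filter base containing K; a cluster point k in K lies in such an open B,
   which meets K `\` B. *)
Lemma compact_separation (N O : set T -> Prop) (D : set T -> set T -> Prop) K :
  compact K -> (forall B, O B -> open B) ->
  N setT -> O set0 -> D setT set0 ->
  (forall A A', N A -> N A' -> N (A `&` A')) ->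
  (forall B B', O B -> O B' -> O (B `|` B')) ->
  (forall A A' B B', D A B -> D A' B' -> D (A `&` A') (B `|` B')) ->
  (forall k, K k -> exists A B, [/\ N A, O B, B k & D A B]) ->
  exists A B, [/\ N A, O B, K `<=` B & D A B].
Proof.
move=> cK oO NT O0 DT0 NI OU DIU sep; apply: contrapT => nosep.
pose separable B := exists A, [/\ N A, O B & D A B].
pose F := filter_from separable (fun B => K `\` B).
have F_filter : Filter F.
  apply: filter_from_filter; first by exists set0, setT.
  move=> B1 B2 [A1 [NA1 OB1 D1]] [A2 [NA2 OB2 D2]].
  exists (B1 `|` B2); first by exists (A1 `&` A2); split; auto.
  by move=> x [Kx /not_orP[]].
have F_proper : ProperFilter F.
  apply: filter_from_proper => B [A [NA OB DAB]].
  apply/set0P/eqP => KB0; apply: nosep; exists A, B.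
  split=> // x Kx; apply: contrapT => nBx.
  by have : (K `\` B) x by []; rewrite KB0.
have FK : F K by exists set0; [exists setT | move=> x []].
have [k [Kk clk]] := cK F F_proper FK.
have [A [B [NA OB Bk DAB]]] := sep k Kk.
have FKB : F (K `\` B) by exists B; [exists A |].
have [y [[_ nBy] By]] := clk _ _ FKB (open_nbhs_nbhs (conj (oO B OB) Bk)).
exact: nBy.
Qed.

Lemma compact_separation_disjoint (P : set T -> Prop) (x : T) K :
  compact K -> (forall B, P B -> open B) -> P setT -> P set0 ->
  (forall A A', P A -> P A' -> P (A `&` A')) ->
  (forall B B', P B -> P B' -> P (B `|` B')) ->
  (forall k, K k -> exists A B, [/\ P A, P B, A x, B k & A `&` B = set0]) ->
  exists A B, [/\ P A, P B, A x, K `<=` B & A `&` B = set0].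
Proof.
move=> cK oP PT P0 PI PU sep.
suff [A [B [[PA Ax] PB KB AB0]]] :
    exists A B, [/\ P A /\ A x, P B, K `<=` B & A `&` B = set0].
  by exists A, B.
apply: compact_separation => //.
- exact: setI0.
- by move=> A A' [PA Ax] [PA' A'x]; split; [exact: PI | split].
- by move=> A A' B B'; exact: setIU_eq0.
- by move=> k /sep [A [B [PA PB Ax Bk AB0]]]; exists A, B.
Qed.

Lemma compact_separation_closure (x : T) K :
  compact K ->
  (forall k, K k -> exists A B,
     [/\ open A, open B, A x, B k & closure A `&` closure B = set0]) ->
  exists A B,
    [/\ open A, open B, A x, K `<=` B & closure A `&` closure B = set0].
Proof.
move=> cK sep.
suff [A [B [[oA Ax] oB KB AB0]]] : exists A B,
    [/\ open A /\ A x, open B, K `<=` B & closure A `&` closure B = set0].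
  by exists A, B.
apply: compact_separation => //.
- by split; [exact: openT |].
- exact: open0.
- by rewrite closure0 setI0.
- by move=> A A' [oA Ax] [oA' A'x]; split; [exact: openI | split].
- exact: openU.
- move=> A A' B B' AB0 AB0'; rewrite closureU.
  apply: subsetI_eq0 (@closureI _ A A') (@subset_refl _ _) _.
  exact: setIU_eq0.
- by move=> k /sep [A [B [oA oB Ax Bk AB0]]]; exists A, B.
Qed.

Lemma closure_setC_closure_sub (V : set T) :
  open V -> closure (~` closure V) `<=` ~` V.
Proof.
move=> oV; rewrite closure_setC; apply: subsetC.
by rewrite -{1}((interior_id V).1 oV); exact/interiorS/subset_closure.
Qed.

End separation.

Section zero_sets.
Context {T : topologicalType}.
Implicit Types A B : set T.
Local Open Scope ring_scope.

Lemma cozero_setE A : cozero_set A <->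
  exists f : T -> Rdefinitions.R, continuous f /\ A = f @^-1` [set~ 0].
Proof. by rewrite /cozero_set R0E. Qed.

Lemma zero_setE A : zero_set A <->
  exists f : T -> Rdefinitions.R, continuous f /\ A = f @^-1` [set 0].
Proof. by rewrite /zero_set R0E. Qed.

Lemma zero_setC A : cozero_set A -> zero_set (~` A).
Proof.
by move=> /cozero_setE [f [cf ->]]; apply/zero_setE; exists f; rewrite setCK.
Qed.

Lemma cozero_setC A : zero_set A -> cozero_set (~` A).
Proof. by move=> /zero_setE [f [cf ->]]; apply/cozero_setE; exists f. Qed.

Lemma cozero_set_open A : cozero_set A -> open A.
Proof.
move=> /cozero_setE [f [cf ->]]; rewrite -preimage_setC; apply: closed_openC.
exact: (continuous_closedP f).1 cf _ (@closed_eq _ 0).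
Qed.

Lemma cozero_setT : cozero_set (@setT T).
Proof.
apply/cozero_setE; exists (fun=> 1).
split; first by move=> x; exact: cst_continuous.
by apply/seteqP; split=> // x _ /eqP; rewrite oner_eq0.
Qed.

Lemma cozero_set0 : cozero_set (@set0 T).
Proof.
apply/cozero_setE; exists (fun=> 0).
split; first by move=> x; exact: cst_continuous.
by apply/seteqP; split=> // x; apply.
Qed.

Lemma cozero_setI A B : cozero_set A -> cozero_set B -> cozero_set (A `&` B).
Proof.
move=> /cozero_setE [f [cf ->]] /cozero_setE [g [cg ->]]; apply/cozero_setE.
exists (f \* g); split; first by move=> x; exact: continuousM (cf x) (cg x).
apply/seteqP; split=> x /=.
- move=> [fx gx] /eqP; rewrite mulf_eq0 => /orP[] /eqP; [exact: fx | exact: gx].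
- by move=> fgx; split=> x0; apply: fgx; rewrite x0 (mul0r, mulr0).
Qed.

Lemma cozero_setU A B : cozero_set A -> cozero_set B -> cozero_set (A `|` B).
Proof.
move=> /cozero_setE [f [cf ->]] /cozero_setE [g [cg ->]]; apply/cozero_setE.
exists (fun x => f x ^+ 2 + g x ^+ 2); split.
  move=> x; exact: (@continuousD _ Rdefinitions.R^o _ _ _ x
    (continuousM (cf x) (cf x)) (continuousM (cg x) (cg x))).
apply/seteqP; split=> x /=.
- move=> fgx /eqP; rewrite paddr_eq0 ?sqr_ge0 // !sqrf_eq0.
  by case/andP=> /eqP f0 /eqP g0; case: fgx.
- move=> sum_neq0; apply: contrapT => /not_orP [/contrapT f0 /contrapT g0].
  by apply: sum_neq0; rewrite f0 g0 expr0n addr0.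
Qed.

End zero_sets.

Section separation_axioms.
Context {T : topologicalType}.
Implicit Types K : set T.

Lemma completely_hausdorff_compact_zero_closed K :
  @completely_hausdorff T -> compact K -> zero_closed K.
Proof.
move=> cH cK x nKx.
have sep k : K k -> exists A B,
    [/\ cozero_set A, cozero_set B, A x, B k & A `&` B = set0].
  by move=> Kk; apply: cH => xk; apply: nKx; rewrite xk.
have [A [B [cA cB Ax KB AB0]]] := compact_separation_disjoint cK
  (@cozero_set_open T) cozero_setT cozero_set0
  (@cozero_setI T) (@cozero_setU T) sep.
exists (~` B), A; split=> //; first exact: zero_setC.
- exact/disjoints_subset.
- exact: subsetC.
Qed.

Lemma zero_closed_set1_completely_hausdorff :
  (forall y : T, zero_closed [set y]) -> @completely_hausdorff T.
Proof.
move=> zc x y xy; have [Z [C [zZ cC Cx CZ Zy]]] := zc y x xy.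
exists C, (~` Z); split=> //; first exact: cozero_setC.
- by move=> /Zy; apply.
- by apply/disjoints_subset; rewrite setCK.
Qed.

Lemma urysohn_compact_urysohn_closed K :
  @urysohn_space T -> compact K -> urysohn_closed K.
Proof.
move=> uT cK x nKx.
have sep k : K k -> exists A B,
    [/\ open A, open B, A x, B k & closure A `&` closure B = set0].
  by move=> Kk; apply: uT => xk; apply: nKx; rewrite xk.
have [A [B [oA oB Ax KB AB0]]] := compact_separation_closure cK sep.
exists A, (~` closure B); split=> //; first exact/closed_openC/closed_closure.
- exact/disjoints_subset.
- exact: subset_trans (closure_setC_closure_sub oB) (subsetC KB).
Qed.

Lemma urysohn_closed_set1_urysohn :
  (forall y : T, urysohn_closed [set y]) -> @urysohn_space T.
Proof.
move=> uc x y xy; have [U [V [oU oV Ux UV Vy]]] := uc y x xy.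
exists U, (~` closure V); split=> //; first exact/closed_openC/closed_closure.
- by move=> /Vy; apply.
- apply/disjoints_subset/(subset_trans UV).
  exact/subsetCr/closure_setC_closure_sub.
Qed.

Lemma hausdorff_compact_theta_closed K :
  hausdorff_space T -> compact K -> theta_closed K.
Proof.
move=> hT cK; apply/seteqP; split=> x; last first.
  by move=> Kx U oU Ux; exists x; split=> //; exact: subset_closure.
move=> Kthx; apply: contrapT => nKx.
have sep k : K k -> exists A B, [/\ open A, open B, A x, B k & A `&` B = set0].
  move=> Kk; have xk : x != k by apply/eqP => xk; apply: nKx; rewrite xk.
  move: hT; rewrite open_hausdorff => /(_ x k xk) [[A B] /=].
  by case=> /set_mem Ax /set_mem Bk [oA oB /eqP AB0]; exists A, B.
have [A [B [oA oB Ax KB AB0]]] := compact_separation_disjoint cK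
  (fun _ => id) openT open0 (@openI T) (@openU T) sep.
have [z [Az Kz]] := Kthx A oA Ax.
have : (closure A `&` B) z by split=> //; exact: KB.
by rewrite closureI_open_eq0.
Qed.

Lemma theta_closed_set1_hausdorff :
  (forall y : T, theta_closed [set y]) -> hausdorff_space T.
Proof.
move=> thc; rewrite open_hausdorff => x y /eqP xy.
have nthx : ~ theta_closure [set y] x by rewrite thc.
apply: contrapT => nsep; apply: nthx => U oU Ux.
have [clUy|nclUy] := pselect (closure U y); first by exists y.
exfalso; apply: nsep; exists (U, ~` closure U); first by split; apply/mem_set.
split=> //=; first exact/closed_openC/closed_closure.
by apply/eqP/disjoints_subset; rewrite setCK; exact: subset_closure.
Qed.

End separation_axioms.

Section subsingletons.
Context {T : topologicalType}.

Lemma compact_card_le_unitP (P : set T -> Prop) : P set0 ->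
  (forall K, compact K -> K #<= [set: unit] -> P K) <-> (forall x, P [set x]).
Proof.
move=> P0; split=> [PK x | P1 K _ /card_le_unit_cases [->|[x ->]]] //.
exact: PK _ (compact_set1 (x := x)) (card_le_unit_set1 x).
Qed.

Lemma delta_closed0 : delta_closed (@set0 T).
Proof.
move=> x /(_ setT); rewrite /regular_open closureT interiorT.
by case/(_ erefl I) => z [].
Qed.

Lemma closed_set1_accessible :
  (forall y : T, closed [set y]) -> accessible_space T.
Proof.
move=> cl1 x y /eqP xy; exists (~` [set y]); split.
- exact/closed_openC/cl1.
- exact/mem_set.
- by apply/mem_set; rewrite setCK.
Qed.

Lemma lambda_closed0 : lambda_closed (@set0 T).
Proof.
exists setT, set0; split; [|exact: closed0|by rewrite setI0].
by exists set0; rewrite bigcap_set0.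
Qed.

(* [set x] is the intersection of the open neighbourhoods of x with the
   closure of x; in a T0 space nothing else lies in both. *)
Lemma kolmogorov_lambda_closed_set1 (x : T) :
  kolmogorov_space T -> lambda_closed [set x].
Proof.
move=> kT; pose L := \bigcap_(U in [set U : set T | open U /\ U x]) U.
exists L, (closure [set x]); split; last 2 first.
- exact: closed_closure.
- apply/seteqP; split=> [y -> | y [Ly clxy]].
    by split; [move=> U [] | exact: subset_closure].
  apply: contrapT => yx.
  have /kT [A [[/set_mem xA /set_mem nyA]|[/set_mem yA /set_mem nxA]]] : x != y.
    by apply/eqP => xy; apply: yx.
  + move: xA; rewrite nbhsE => -[B [oB Bx] BA].
    exact: nyA (BA _ (Ly B (conj oB Bx))).
  + by have [z [/= -> Az]] := clxy A yA; apply: nxA.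
- by exists [set U : set T | open U /\ U x]; split=> // U [].
Qed.

Lemma lambda_closed_set1_kolmogorov :
  (forall x : T, lambda_closed [set x]) -> kolmogorov_space T.
Proof.
move=> lc x y xy; have [L [C [[F [oF ->]] cC ex]]] := lc x.
have [Lx Cx] : ((\bigcap_(U in F) U) `&` C) x by rewrite -ex.
have nLCy : ~ ((\bigcap_(U in F) U) `&` C) y.
  by rewrite -ex => /= yx; rewrite yx eqxx in xy.
have [Cy|nCy] := pselect (C y).
  have [U FU nUy] : exists2 U, F U & ~ U y.
    apply: contrapT => nU; apply: nLCy; split=> // U FU.
    by apply: contrapT => nUy; apply: nU; exists U.
  exists U; left; split; last exact/mem_set.
  by apply/mem_set/open_nbhs_nbhs; split; [exact: oF | exact: Lx].
exists (~` C); right; split; last by apply/mem_set; rewrite setCK.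
by apply/mem_set/open_nbhs_nbhs; split; [exact: closed_openC | exact: nCy].
Qed.

End subsingletons.

Theorem mainTheorem1 (T : topologicalType) :
  (@completely_hausdorff T <->
     (forall K : set T, compact K -> K #<= [set: T] -> zero_closed K)) /\
  (@urysohn_space T <-> (forall K : set T, compact K -> urysohn_closed K)) /\
  (@hausdorff_space T <-> (forall K : set T, compact K -> theta_closed K)) /\
  (@kc_space T <-> (forall K : set T, compact K -> closed K)) /\
  (@weakly_hausdorff T <->
     (forall K : set T, compact K -> K #<= [set: unit] -> delta_closed K)) /\
  (@accessible_space T <->
     (forall K : set T, compact K -> K #<= [set: unit] -> closed K)) /\
  (@kolmogorov_space T <->
     (forall K : set T, compact K -> K #<= [set: unit] -> lambda_closed K)).
Proof.
split.
  split=> [cH K cK _ | zc].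
    exact: completely_hausdorff_compact_zero_closed.
  apply: zero_closed_set1_completely_hausdorff => y.
  exact: zc _ (compact_set1 (x := y)) (card_leT _).
split.
  split=> [uT K | uc]; first exact: urysohn_compact_urysohn_closed.
  apply: urysohn_closed_set1_urysohn => y; exact: uc _ (compact_set1 (x := y)).
split.
  split=> [hT K | thc]; first exact: hausdorff_compact_theta_closed.
  apply: theta_closed_set1_hausdorff => y; exact: thc _ (compact_set1 (x := y)).
split; first by [].
split; first exact: iff_sym (compact_card_le_unitP delta_closed0).
split.
  apply: iff_trans (iff_sym (compact_card_le_unitP closed0)).
  by split; [exact: accessible_closed_set1 | exact: closed_set1_accessible].
apply: iff_trans (iff_sym (compact_card_le_unitP lambda_closed0)).
split=> [kT x | ]; first exact: kolmogorov_lambda_closed_set1.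
exact: lambda_closed_set1_kolmogorov.
Qed.
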